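(* Consider a connected one-dimensional network of elastoplastic springs as in the context with $\mathrm{rank}(R^\top D)=q$, $q=n-2$, and no spring blocked by the displacement-controlled loadings (so $\dim U=1$). Let $\bar u$ be a fixed nonzero vector of $U$ and define $\bar c^+,\bar c^-\in\mathbb{R}^m$ by $\bar c^+_i=c_i^{\operatorname{sign}(\bar u_i)}$, $\bar c^-_i=c_i^{-\operatorname{sign}(\bar u_i)}$, where $c_i^{-1}:=c_i^-$ and $c_i^{+1}:=c_i^+$. Then for each fixed $t\ge0$, the safe load condition $(C+Ah(t))\cap U^\perp\neq\emptyset$ holds if and only if $$\langle\bar u,\bar c^++Ah(t)\rangle\cdot\langle\bar u,\bar c^-+Ah(t)\rangle\le0.$$
   Context: Spring $k$ joins left node $i_k$ to right node $j_k$; the graph is connected; $D$ is $m\times n$ with $(D\xi)_k=\xi_{j_k}-\xi_{i_k}$. $A=\mathrm{diag}(a_k)$, $a_k>0$; $c_k^-<c_k^+$; $C=\prod_k[c_k^-,c_k^+]$. Displacement-controlled loadings $\xi_{J_k}-\xi_{I_k}=l_k(t)$, incidence vectors $R^k$ with $(R^k)^\top D\xi=\xi_{J_k}-\xi_{I_k}$, $R=(R^1,\dots,R^q)$. Spring $i$ is blocked if the pairs $\{I_k,J_k\}$ contain a chain connecting its two endpoints. $U=\{x\in D\mathbb{R}^n:R^\top x=0\}$, $U^\perp$ its Euclidean orthogonal complement, $V=A^{-1}U^\perp$, $P_U$ the projection onto $U$ along $V$; $h(t)=P_UA^{-1}\bar h(t)$ with nodal forces $f(t)=-D^\top\bar h(t)$.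 *)

From HB Require Import structures.
From mathcomp Require Import all_boot all_order all_algebra.
Set Implicit Arguments. Unset Strict Implicit. Unset Printing Implicit Defensive.
Import Order.TTheory GRing.Theory Num.Theory.
Local Open Scope ring_scope.

Section Defs.
Variable R : realFieldType.

Definition dot m (x y : 'cV[R]_m) : R := \sum_(k < m) x k 0 * y k 0.

(* Incidence matrix of a family of pairs (i_k, j_k): row k is e_{j_k} - e_{i_k},
   so (incmx i j *m xi) k = xi_{j k} - xi_{i k}.  With the springs this is D. *)
Definition incmx m n (i j : 'I_m -> 'I_n) : 'M[R]_(m, n) :=
  \matrix_(k, l) ((l == j k)%:R - (l == i k)%:R).

Definition diagA m (a : 'I_m -> R) (x : 'cV[R]_m) : 'cV[R]_m :=
  \col_k (a k * x k 0).
Definition invA m (a : 'I_m -> R) (x : 'cV[R]_m) : 'cV[R]_m :=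
  \col_k ((a k)^-1 * x k 0).

Definition inU m n q (D : 'M[R]_(m, n)) (Rm : 'M[R]_(m, q)) (x : 'cV[R]_m) : Prop :=
  (exists xi : 'cV[R]_n, x = D *m xi) /\ Rm^T *m x = 0.

Definition inUperp m n q (D : 'M[R]_(m, n)) (Rm : 'M[R]_(m, q)) (y : 'cV[R]_m) : Prop :=
  forall x, inU D Rm x -> dot x y = 0.

Definition inV m n q (D : 'M[R]_(m, n)) (Rm : 'M[R]_(m, q)) (a : 'I_m -> R)
  (z : 'cV[R]_m) : Prop :=
  exists y, inUperp D Rm y /\ z = invA a y.

Definition inC m (cm cp : 'I_m -> R) (c : 'cV[R]_m) : Prop :=
  forall k, cm k <= c k 0 <= cp k.

(* c_k^s for s = -1 or +1 (c^{-1} := c^-, c^{+1} := c^+).  For s = 0 (only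
   arising when the corresponding component of ubar is 0, where the value is
   irrelevant) we take c^+ by convention. *)
Definition cpow m (cm cp : 'I_m -> R) (s : R) (k : 'I_m) : R :=
  if s == -1 then cm k else cp k.

(* cbar^{+} (eps = 1) and cbar^{-} (eps = -1): cbar_i = c_i^{eps * sign(u_i)} *)
Definition cbar m (cm cp : 'I_m -> R) (eps : R) (u : 'cV[R]_m) : 'cV[R]_m :=
  \col_k cpow cm cp (eps * Num.sg (u k 0)) k.

End Defs.

Definition pair_rel m n (i j : 'I_m -> 'I_n) : rel 'I_n :=
  fun x y => [exists k : 'I_m, ((i k == x) && (j k == y)) || ((i k == y) && (j k == x))].

Definition graph_connected m n (i j : 'I_m -> 'I_n) : Prop :=
  forall x y : 'I_n, connect (pair_rel i j) x y.

Definition blocked m n q (i j : 'I_m -> 'I_n) (I J : 'I_q -> 'I_n) (k : 'I_m) : Prop :=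
  connect (pair_rel I J) (i k) (j k).

Definition safe_load (R : realFieldType) m n q (D : 'M[R]_(m, n)) (Rm : 'M[R]_(m, q))
  (a cm cp : 'I_m -> R) (ht : 'cV[R]_m) : Prop :=
  exists c, inC cm cp c /\ inUperp D Rm (c + diagA a ht).

(* Since D kills the constant vector 1 and rank (R^T D) = n - 2, the kernel of
   R^T D is a plane containing 1.  Every x = D xi in U has xi in that plane, as
   has any preimage of ubar; since D kills 1, U is the line spanned by ubar, so
   y is in U^perp iff <ubar, y> = 0.  The safe load condition thus asks for
   some c in the box C with <ubar, c> = - <ubar, A h(t)>.  Over C, <ubar, c>
   takes exactly the values of the interval [<ubar, cbar^->, <ubar, cbar^+>]:
   the bounds hold coordinatewise, and the box is convex.  Finally 0 lies in
   [alpha, beta] iff alpha * beta <= 0. *)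

From mathcomp Require Import all_boot all_order all_algebra ring lra.

Set Implicit Arguments.
Unset Strict Implicit.
Unset Printing Implicit Defensive.

Import Order.TTheory GRing.Theory Num.Theory.
Local Open Scope ring_scope.

Lemma rowV_triple_dependent (F : fieldType) p n (K : 'M[F]_(p, n)) (x y z : 'rV[F]_n) :
  (\rank K <= 2)%N -> (x <= K)%MS -> (y <= K)%MS -> (z <= K)%MS ->
  exists a b c : F, (a, b, c) != (0, 0, 0) /\ a *: x + b *: y + c *: z = 0.
Proof.
move=> rkK xK yK zK; pose S := col_mx x (col_mx y z).
have rkS : (\rank S <= 2)%N.
  by apply: leq_trans rkK; apply: mxrankS; rewrite !col_mx_sub xK yK zK.
have : kermx S != 0 by rewrite kermx_eq0 /row_free; apply: contraTN rkS => /eqP ->.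
case/rowV0Pn => v /sub_kermxP vS v_neq0.
exists (lsubmx v 0 0), (lsubmx (rsubmx v) 0 0), (rsubmx (rsubmx v) 0 0); split.
  apply: contra v_neq0 => /eqP[a0 b0 c0].
  rewrite -(hsubmxK v) -(hsubmxK (rsubmx v)) !row_mx_eq0.
  by rewrite (mx11_scalar (lsubmx v)) (mx11_scalar (lsubmx (rsubmx v)))
    (mx11_scalar (rsubmx (rsubmx v))) a0 b0 c0 raddf0 eqxx.
rewrite -(hsubmxK v) -(hsubmxK (rsubmx v)) !mul_row_col addrA in vS.
by rewrite -!mul_scalar_mx -!mx11_scalar.
Qed.

Lemma incmx_mul_const1 (R : realFieldType) m n (i j : 'I_m -> 'I_n) :
  incmx R i j *m (const_mx 1 : 'cV[R]_n) = 0.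
Proof.
have sum_delta (l : 'I_n) : \sum_(l' < n) (l' == l)%:R = 1 :> R.
  by rewrite (bigD1 l) //= eqxx big1 ?addr0 // => l' /negbTE ->.
apply/matrixP => k ?; rewrite !mxE.
under eq_bigr => l _ do rewrite !mxE mulr1.
by rewrite sumrB !sum_delta subrr.
Qed.

Lemma inU_colinear (R : realFieldType) m n q (D : 'M[R]_(m, n)) (Rm : 'M[R]_(m, q))
    (u x : 'cV[R]_m) :
  D *m (const_mx 1 : 'cV[R]_n) = 0 -> (\rank (Rm^T *m D) + 2)%N = n ->
  inU D Rm u -> u != 0 -> inU D Rm x -> exists l, x = l *: u.
Proof.
move=> D1 rkM [[xi_u ->] Ru] u_neq0 [[xi_x ->] Rx].
pose o : 'cV[R]_n := const_mx 1.
have inK (xi : 'cV_n) : Rm^T *m (D *m xi) = 0 -> (xi^T <= kermx (Rm^T *m D)^T)%MS.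
  by move=> Mxi; apply/sub_kermxP; rewrite -trmx_mul -mulmxA Mxi trmx0.
have rkK : (\rank (kermx (Rm^T *m D)^T) <= 2)%N.
  by rewrite mxrank_ker mxrank_tr leq_subLR rkM.
have oK : (o^T <= kermx (Rm^T *m D)^T)%MS by apply: inK; rewrite D1 mulmx0.
have [a [b [c [abc_neq0 dep]]]] := rowV_triple_dependent rkK oK (inK _ Rx) (inK _ Ru).
have := congr1 (fun r => D *m r^T) dep.
rewrite trmx0 mulmx0 !linearD /= !linearZ /= !trmxK /o D1 scaler0 add0r.
move=> /eqP; rewrite addr_eq0 => /eqP b_x.
have [b0 | b_neq0] := eqVneq b 0.
  have c0 : c = 0.
    by move/eqP: b_x; rewrite b0 scale0r eq_sym oppr_eq0 scalemx_eq0 (negbTE u_neq0) orbF => /eqP.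
  move: dep; rewrite b0 c0 !scale0r !addr0 => /eqP; rewrite scalemx_eq0.
  have o_neq0 : o^T != 0.
    have n_gt0 : (0 < n)%N by apply: leq_trans (eq_leq rkM); rewrite addn2.
    apply/eqP => /matrixP/(_ 0 (Ordinal n_gt0))/eqP; rewrite !mxE; exact/negP/oner_neq0.
  by rewrite (negbTE o_neq0) orbF => /eqP a0; move: abc_neq0; rewrite a0 b0 c0 eqxx.
exists (- c / b); apply: (scalerI b_neq0).
by rewrite b_x scalerA mulrC divfK // scaleNr.
Qed.

Section Dot.
Variables (R : realFieldType) (m : nat).
Implicit Types (x y z : 'cV[R]_m) (l : R).

Lemma dotDr x y z : dot x (y + z) = dot x y + dot x z.
Proof. by rewrite /dot -big_split; apply: eq_bigr => k _; rewrite mxE mulrDr. Qed.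

Lemma dotZr l x y : dot x (l *: y) = l * dot x y.
Proof. by rewrite /dot mulr_sumr; apply: eq_bigr => k _; rewrite mxE mulrCA. Qed.

Lemma dotZl l x y : dot (l *: x) y = l * dot x y.
Proof. by rewrite /dot mulr_sumr; apply: eq_bigr => k _; rewrite mxE mulrA. Qed.

End Dot.

Lemma inUperp_line (R : realFieldType) m n q (D : 'M[R]_(m, n)) (Rm : 'M[R]_(m, q))
    (u y : 'cV[R]_m) :
  inU D Rm u -> (forall x, inU D Rm x -> exists l, x = l *: u) ->
  inUperp D Rm y <-> dot u y = 0.
Proof.
move=> Uu U_line; split => [perp | uy0]; first exact: perp.
by move=> x /U_line[l ->]; rewrite dotZl uy0 mulr0.
Qed.

Lemma mul_le0_between (R : realFieldType) (a b : R) :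
  a <= b -> (b * a <= 0) = (a <= 0 <= b).
Proof.
move=> le_ab; apply/idP/andP => [ba_le0 | [a_le0 b_ge0]]; last exact: mulr_ge0_le0.
by split; nra.
Qed.

Section Box.
Variables (R : realFieldType) (m : nat) (cm cp : 'I_m -> R).
Hypothesis cm_le_cp : forall k, cm k <= cp k.
Implicit Types (u c : 'cV[R]_m).

Lemma cpow_bounds s k : cm k <= cpow cm cp s k <= cp k.
Proof. by rewrite /cpow; case: ifP => _; rewrite cm_le_cp lexx. Qed.

Lemma inC_cbar eps u : inC cm cp (cbar cm cp eps u).
Proof. by move=> k; rewrite mxE cpow_bounds. Qed.

Lemma inC_convex l c1 c2 :
  0 <= l <= 1 -> inC cm cp c1 -> inC cm cp c2 -> inC cm cp ((1 - l) *: c1 + l *: c2).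
Proof.
move=> /andP[l_ge0 l_le1] C1 C2 k; rewrite !mxE.
case/andP: (C1 k) => ? ?; case/andP: (C2 k) => ? ?.
apply/andP; split; nra.
Qed.

Lemma mul_cbar_bounds u k (x : R) : cm k <= x <= cp k ->
  u k 0 * cbar cm cp (-1) u k 0 <= u k 0 * x <= u k 0 * cbar cm cp 1 u k 0.
Proof.
move=> /andP[lo hi]; rewrite !mxE /cpow mul1r.
have one_neqN1 : (1 == -1 :> R) = false by apply: gt_eqF; lra.
have [u_lt0 | u_gt0 | ->] := ltrgtP (u k 0) 0; last by rewrite !mul0r lexx.
- by rewrite ltr0_sg // mulrN1 opprK one_neqN1 eqxx; apply/andP; split; nra.
- by rewrite gtr0_sg // mulr1 one_neqN1 eqxx; apply/andP; split; nra.
Qed.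

Lemma dot_cbar_bounds u c : inC cm cp c ->
  dot u (cbar cm cp (-1) u) <= dot u c <= dot u (cbar cm cp 1 u).
Proof.
move=> Cc; apply/andP; split; apply: ler_sum => k _;
  by case/andP: (mul_cbar_bounds u (Cc k)).
Qed.

Lemma dot_inC_onto u s :
  dot u (cbar cm cp (-1) u) <= s <= dot u (cbar cm cp 1 u) ->
  exists c, inC cm cp c /\ dot u c = s.
Proof.
set sM := dot u _; set sP := dot u _ => /andP[lo hi].
pose l := if sP == sM then 0 else (s - sM) / (sP - sM).
have l_bounds : 0 <= l <= 1.
  rewrite /l; case: eqP => [_ | /eqP ?]; first by rewrite lexx ler01.
  have ? : 0 < sP - sM by rewrite subr_gt0 lt_def eq_sym; apply/andP; split=> //; lra.
  by rewrite divr_ge0 ?ler_pdivrMr ?mul1r; lra.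
exists ((1 - l) *: cbar cm cp (-1) u + l *: cbar cm cp 1 u); split.
  by apply: inC_convex => //; exact: inC_cbar.
rewrite dotDr !dotZr -/sM -/sP /l; case: eqP => [? | /eqP ?]; first lra.
by field; rewrite subr_eq0.
Qed.

Lemma inC_dot_root u d :
  (exists c, inC cm cp c /\ dot u c + d = 0) <->
  (dot u (cbar cm cp 1 u) + d) * (dot u (cbar cm cp (-1) u) + d) <= 0.
Proof.
have [le_MP _] := andP (dot_cbar_bounds u (inC_cbar 1 u)).
rewrite mul_le0_between ?lerD2r //; split => [[c [Cc ?]] | /andP[lo hi]].
  by case/andP: (dot_cbar_bounds u Cc) => ? ?; apply/andP; split; lra.
have [|c [Cc uc]] := @dot_inC_onto u (- d); first by apply/andP; split; lra.
by exists c; split; rewrite ?uc ?addNr.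
Qed.

End Box.

Theorem proposition2 (R : realFieldType) (n m q : nat)
  (i j : 'I_m -> 'I_n) (a cm cp : 'I_m -> R)
  (I J : 'I_q -> 'I_n) (Rm : 'M[R]_(m, q))
  (hbar h : R -> 'cV[R]_m) (ubar : 'cV[R]_m) :
  graph_connected i j ->
  (forall k, 0 < a k) ->
  (forall k, cm k < cp k) ->
  Rm^T *m incmx R i j = incmx R I J ->
  \rank (Rm^T *m incmx R i j) = q ->
  (q + 2)%N = n ->
  (forall k, ~ blocked i j I J k) ->
  (forall t, inU (incmx R i j) Rm (h t)) ->
  (forall t, inV (incmx R i j) Rm a (invA a (hbar t) - h t)) ->
  inU (incmx R i j) Rm ubar -> ubar != 0 ->
  forall t : R, 0 <= t ->
    (safe_load (incmx R i j) Rm a cm cp (h t) <->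
     dot ubar (cbar cm cp 1 ubar + diagA a (h t))
       * dot ubar (cbar cm cp (-1) ubar + diagA a (h t)) <= 0).
Proof.
(* Connectivity and the absence of blocked springs are how the paper obtains
   dim U = 1; here the rank hypothesis and D 1 = 0 give it directly. *)
move=> _ _ lt_c _ rk_q q2n _ _ _ U_ubar ubar_neq0 t _.
have rkM : (\rank (Rm^T *m incmx R i j) + 2)%N = n by rewrite rk_q.
have U_line := inU_colinear (incmx_mul_const1 R i j) rkM U_ubar ubar_neq0.
have perpE y := inUperp_line y U_ubar U_line.
have le_c k : cm k <= cp k := ltW (lt_c k).
rewrite !dotDr -(inC_dot_root le_c); split=> -[c [Cc perp]]; exists c; split=> //.
  by rewrite -dotDr -perpE.
by rewrite perpE dotDr.
Qed.
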